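(* Let $G$ be a compact topological group admitting a continuous $2$-transitive action on a topological space $X$ satisfying the $T_1$ separation axiom (all singletons closed). Then $X$ is finite.
   Context: Continuity of the action means (at least) that each orbit map $G\to X$, $g\mapsto g\cdot x$, is continuous. *)

From Stdlib Require Import List.
Set Implicit Arguments.

Record is_topology (X : Type) (open : (X -> Prop) -> Prop) : Prop := {
  open_full : open (fun _ => True);
  open_union : forall (I : Type) (F : I -> X -> Prop),
      (forall i, open (F i)) -> open (fun x => exists i, F i x);
  open_inter : forall U V, open U -> open V -> open (fun x => U x /\ V x)
}.

Definition continuous (X Y : Type) (openX : (X -> Prop) -> Prop)
  (openY : (Y -> Prop) -> Prop) (f : X -> Y) : Prop :=
  forall V, openY V -> openX (fun x => V (f x)).

Definition prod_open (A B : Type) (openA : (A -> Prop) -> Prop)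
  (openB : (B -> Prop) -> Prop) (W : A * B -> Prop) : Prop :=
  forall a b, W (a, b) ->
    exists U V, openA U /\ openB V /\ U a /\ V b /\
      (forall a' b', U a' -> V b' -> W (a', b')).

Definition compact (X : Type) (open : (X -> Prop) -> Prop) : Prop :=
  forall (I : Type) (F : I -> X -> Prop),
    (forall i, open (F i)) -> (forall x, exists i, F i x) ->
    exists l : list I, forall x, exists i, In i l /\ F i x.

Definition T1 (X : Type) (open : (X -> Prop) -> Prop) : Prop :=
  forall x : X, open (fun y => y <> x).

Record is_group (G : Type) (mul : G -> G -> G) (inv : G -> G) (e : G) : Prop := {
  mulA : forall a b c, mul a (mul b c) = mul (mul a b) c;
  mul1g : forall a, mul e a = a;
  mulg1 : forall a, mul a e = a;
  mulVg : forall a, mul (inv a) a = e;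
  mulgV : forall a, mul a (inv a) = e
}.

Definition is_topological_group (G : Type) (openG : (G -> Prop) -> Prop)
  (mul : G -> G -> G) (inv : G -> G) (e : G) : Prop :=
  is_topology openG /\ is_group mul inv e /\
  continuous (prod_open openG openG) openG (fun p => mul (fst p) (snd p)) /\
  continuous openG openG inv.

Definition is_action (G X : Type) (mul : G -> G -> G) (e : G)
  (act : G -> X -> X) : Prop :=
  (forall x, act e x = x) /\
  (forall g h x, act (mul g h) x = act g (act h x)).

(** Continuity of the action, in the sense of the paper: every orbit map
    g |-> g.x is continuous. *)
Definition orbit_maps_continuous (G X : Type) (openG : (G -> Prop) -> Prop)
  (openX : (X -> Prop) -> Prop) (act : G -> X -> X) : Prop :=
  forall x : X, continuous openG openX (fun g => act g x).

Definition two_transitive (G X : Type) (act : G -> X -> X) : Prop :=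
  forall x1 x2 y1 y2 : X, x1 <> x2 -> y1 <> y2 ->
    exists g : G, act g x1 = y1 /\ act g x2 = y2.

Definition finite_type (X : Type) : Prop :=
  exists l : list X, forall x : X, In x l.

From Stdlib Require Import List Classical FunctionalExtensionality PropExtensionality.
Set Implicit Arguments.

(* Fix two distinct points x0 <> z (otherwise X has at most one point) and let
   H be the stabilizer of x0 and S = {g | g.x0 = z}.  Both are closed: they are
   fibres of the continuous orbit map g |-> g.x0 over closed points.  By
   2-transitivity, g.x0 <> x0 exactly when g = k.s with k in H and s in S, so
   the complement of H is the product H.S.  In a compact group the product of
   two closed sets is closed (a tube-lemma argument), hence H is open.  The
   open cosets gH then cover G; a finite subcover gives finitely many points
   g.x0, and these exhaust X because the action is transitive. *)

Definition closed (T : Type) (open : (T -> Prop) -> Prop) (P : T -> Prop) : Prop :=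
  open (fun x => ~ P x).

Section OpenSets.
Variables (T : Type) (open : (T -> Prop) -> Prop).
Hypothesis HT : is_topology open.

Lemma open_ext (P Q : T -> Prop) : (forall x, P x <-> Q x) -> open P -> open Q.
Proof.
  intros HPQ HP. replace Q with P; auto.
  apply functional_extensionality; intro x; apply propositional_extensionality; auto.
Qed.

Lemma open_local (P : T -> Prop) :
  (forall x, P x -> exists U, open U /\ U x /\ forall y, U y -> P y) -> open P.
Proof.
  intro Hloc.
  pose (I := {U : T -> Prop | open U /\ forall y, U y -> P y}).
  apply (open_ext (P := fun x => exists i : I, proj1_sig i x)).
  - intro x; split.
    + intros [i Hx]; exact (proj2 (proj2_sig i) x Hx).
    + intro Px. destruct (Hloc x Px) as [U [HU [Ux HUP]]].
      exists (exist _ U (conj HU HUP)); exact Ux.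
  - apply (open_union HT (fun i : I => proj1_sig i)).
    intro i; exact (proj1 (proj2_sig i)).
Qed.

Lemma open_finite_inter (I : Type) (F : I -> T -> Prop) (l : list I) :
  (forall i, open (F i)) -> open (fun x => forall i, In i l -> F i x).
Proof.
  intro HF. induction l as [|a l IH].
  - apply (open_ext (P := fun _ => True)); [|exact (open_full HT)].
    intro x; split; [intros _ i []|auto].
  - apply (open_ext (P := fun x => F a x /\ forall i, In i l -> F i x)).
    + intro x; split.
      * intros [Ha Hl] i [<-|Hi]; auto.
      * intro Hx; split; [apply Hx; left | intros i Hi; apply Hx; right]; auto.
    + apply (open_inter HT); auto.
Qed.

End OpenSets.

Section CompactGroup.
Variables (G : Type) (openG : (G -> Prop) -> Prop)
  (mul : G -> G -> G) (inv : G -> G) (e : G).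
Hypothesis HG : is_topological_group openG mul inv e.
Hypothesis HGc : compact openG.

Lemma open_left_translate (c : G) (W : G -> Prop) :
  openG W -> openG (fun g => W (mul c g)).
Proof.
  destruct HG as [HT [_ [Hmul _]]]. intro HW.
  apply (open_local HT). intros g Hg.
  destruct (Hmul W HW c g Hg) as [U [V [_ [HV [Uc [Vg HUV]]]]]].
  exists V; split; [exact HV | split; [exact Vg |]].
  intros h Vh; exact (HUV c h Uc Vh).
Qed.

Definition tube (C : G -> Prop) (v0 : G) (p : (G -> Prop) * (G -> Prop)) : Prop :=
  openG (fst p) /\ openG (snd p) /\ snd p v0 /\
  forall u v, fst p u -> snd p v -> ~ C (mul (inv u) v).

Lemma tube_exists (C : G -> Prop) (v0 k : G) :
  closed openG C -> ~ C (mul (inv k) v0) ->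
  exists p, tube C v0 p /\ fst p k.
Proof.
  destruct HG as [_ [_ [Hmul Hinv]]]. intros HC Hk.
  destruct (Hmul _ HC (inv k) v0 Hk) as [U [V [HU [HV [Uk [Vv HUV]]]]]].
  exists ((fun u => U (inv u)), V); split; [|exact Uk].
  split; [exact (Hinv U HU)|]. split; [exact HV|]. split; [exact Vv|].
  intros u v Hu Hv; exact (HUV _ _ Hu Hv).
Qed.

(* In a compact group, K.C = {k c | K k, C c} is closed when K and C are. *)
Lemma closed_mul_closed (K C : G -> Prop) :
  closed openG K -> closed openG C ->
  closed openG (fun v => exists k, K k /\ C (mul (inv k) v)).
Proof.
  destruct HG as [HT _]. intros HK HC.
  apply (open_local HT). intros v0 Hv0.
  pose (Tubes := {p | tube C v0 p}).
  (* cover G by the complement of K and the first components of the tubes *)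
  pose (F := fun i : option Tubes =>
               match i with Some p => fst (proj1_sig p) | None => fun k => ~ K k end).
  pose (F2 := fun i : option Tubes =>
               match i with Some p => snd (proj1_sig p) | None => fun _ => True end).
  assert (HFo : forall i, openG (F i)).
  { intros [p|]; [exact (proj1 (proj2_sig p)) | exact HK]. }
  assert (Hcover : forall k, exists i, F i k).
  { intro k. destruct (classic (K k)) as [Kk|Kk]; [|now exists None].
    destruct (@tube_exists C v0 k HC (fun Ck => Hv0 (ex_intro _ k (conj Kk Ck))))
      as [p [Hp Hk]].
    now exists (Some (exist _ p Hp)). }
  destruct (HGc F HFo Hcover) as [l Hl].
  exists (fun v => forall i, In i l -> F2 i v); split; [|split].
  - apply (open_finite_inter HT).
    intros [p|]; [exact (proj1 (proj2 (proj2_sig p))) | exact (open_full HT)].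
  - intros [p|] _; [exact (proj1 (proj2 (proj2 (proj2_sig p)))) | exact I].
  - intros v Hv [k [Kk Ck]].
    destruct (Hl k) as [[p|] [Hi Fk]]; simpl in Fk; [|contradiction].
    exact (proj2 (proj2 (proj2 (proj2_sig p))) k v Fk (Hv _ Hi) Ck).
Qed.

End CompactGroup.

Section Action.
Variables (G X : Type) (openG : (G -> Prop) -> Prop) (openX : (X -> Prop) -> Prop)
  (mul : G -> G -> G) (inv : G -> G) (e : G) (act : G -> X -> X).
Hypothesis HG : is_topological_group openG mul inv e.
Hypothesis HGc : compact openG.
Hypothesis Hact : is_action mul e act.
Hypothesis Hcont : orbit_maps_continuous openG openX act.

Lemma act_inv_l (g : G) (x : X) : act (inv g) (act g x) = x.
Proof.
  destruct HG as [_ [Hgrp _]]; destruct Hact as [Hae HaM].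
  now rewrite <- HaM, (mulVg Hgrp), Hae.
Qed.

Lemma act_inv_r (g : G) (x : X) : act g (act (inv g) x) = x.
Proof.
  destruct HG as [_ [Hgrp _]]; destruct Hact as [Hae HaM].
  now rewrite <- HaM, (mulgV Hgrp), Hae.
Qed.

Lemma closed_transporter (x y : X) :
  T1 openX -> closed openG (fun g => act g x = y).
Proof. intro HT1; exact (Hcont x (HT1 y)). Qed.

(* Given x0 <> z, 2-transitivity writes every g moving x0 as k.s with k
   fixing x0 and s sending x0 to z; hence the stabilizer is open. *)
Lemma open_stabilizer (x0 z : X) :
  T1 openX -> two_transitive act -> x0 <> z -> openG (fun g => act g x0 = x0).
Proof.
  intros HT1 H2 Hxz. destruct Hact as [_ HaM].
  apply (@open_ext G openG (fun g => ~ exists k, act k x0 = x0 /\ act (mul (inv k) g) x0 = z)).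
  - intro g; split.
    + intro Hno. apply NNPP; intro Hg.
      destruct (H2 x0 z x0 (act g x0) Hxz (fun h => Hg (eq_sym h))) as [k [Hk1 Hk2]].
      apply Hno; exists k; split; auto.
      now rewrite HaM, <- Hk2, act_inv_l.
    + intros Hg [k [Hk Hkg]]. apply Hxz.
      rewrite <- Hkg, HaM, Hg.
      rewrite <- Hk at 2; now rewrite act_inv_l.
  - exact (closed_mul_closed HG HGc _ _
             (closed_transporter x0 x0 HT1) (closed_transporter x0 z HT1)).
Qed.

(* If some orbit is everything and its stabilizer is open, then X is finite:
   the open cosets gH cover the compact group G. *)
Lemma finite_of_open_stabilizer (x0 : X) :
  openG (fun g => act g x0 = x0) -> (forall y, exists g, act g x0 = y) ->
  finite_type X.
Proof.
  intros Hopen Htrans. destruct Hact as [_ HaM].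
  (* coset c g holds when g lies in the coset cH *)
  pose (coset := fun c g => act (mul (inv c) g) x0 = x0).
  assert (Hcoset_open : forall c, openG (coset c)).
  { intro c. exact (open_left_translate HG _ (fun h => act h x0 = x0) Hopen). }
  assert (Hcover : forall g, exists c, coset c g).
  { intro g; exists g. unfold coset. now rewrite HaM, act_inv_l. }
  destruct (HGc coset Hcoset_open Hcover) as [l Hl].
  exists (map (fun c => act c x0) l).
  intro y. destruct (Htrans y) as [g <-].
  destruct (Hl g) as [c [Hc Hgc]]; unfold coset in Hgc.
  apply in_map_iff; exists c; split; [|exact Hc].
  rewrite HaM in Hgc. rewrite <- Hgc at 1; now rewrite act_inv_r.
Qed.

End Action.

Lemma two_transitive_transitive (G X : Type) (mul : G -> G -> G) (e : G)
  (act : G -> X -> X) (x0 z : X) :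
  is_action mul e act -> two_transitive act -> x0 <> z ->
  forall y, exists g, act g x0 = y.
Proof.
  intros [Hae _] H2 Hxz y. destruct (classic (y = x0)) as [->|Hy].
  - now exists e.
  - destruct (H2 x0 z y x0 Hxz Hy) as [g [Hg _]]; eauto.
Qed.

Lemma finite_of_subsingleton (X : Type) :
  (forall x y : X, x = y) -> finite_type X.
Proof.
  intro Hsub. destruct (classic (exists x : X, True)) as [[x _]|Hempty].
  - exists (x :: nil); intro y; left; apply Hsub.
  - exists nil; intro y; apply Hempty; now exists y.
Qed.

Theorem mainTheorem6
  (G X : Type) (openG : (G -> Prop) -> Prop) (openX : (X -> Prop) -> Prop)
  (mul : G -> G -> G) (inv : G -> G) (e : G) (act : G -> X -> X)
  (HG : is_topological_group openG mul inv e)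
  (HGc : compact openG)
  (HX : is_topology openX)
  (HT1 : T1 openX)
  (Hact : is_action mul e act)
  (Hcont : orbit_maps_continuous openG openX act)
  (H2 : two_transitive act) :
  finite_type X.
Proof.
  destruct (classic (exists x0 z : X, x0 <> z)) as [[x0 [z Hxz]] | Hsub].
  - apply (finite_of_open_stabilizer HG HGc Hact x0).
    + exact (open_stabilizer HG HGc Hact Hcont HT1 H2 Hxz).
    + exact (two_transitive_transitive Hact H2 Hxz).
  - apply finite_of_subsingleton; intros x y.
    apply NNPP; intro Hxy; apply Hsub; eauto.
Qed.
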